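(* Let $k,n,q\in\mathbb{N}\cup\{0\}$. If $f$ is a $(k,n)$-continuous function and $g$ is an $(n,q)$-continuous function on $\mathbb{R}^{\mathbb{Z}_<}$, then $f\circ g$ is $(k,q)$-continuous.
   Context: $\mathbb{R}^{\mathbb{Z}_<}$ is the set of formal series $\sum_{i\ge -k}a_i\epsilon^i$ ($k\in\mathbb{N}\cup\{0\}$, $a_i\in\mathbb{R}$), with coefficientwise addition, Cauchy-product multiplication and lexicographic order; $|\cdot|$ is the associated absolute value. For $p\in\mathbb{N}\cup\{0\}$, $\Delta^p=\{a\epsilon^p:a\in\mathbb{R}\}$ (with $a\ne0$ when $p\ge1$). A function $f$ is $(k,n)$-continuous at $\mathbf{c}$ iff for every positive $\iota_1\in\Delta^k$ there is a positive $\iota_2\in\Delta^n$ such that $|\mathbf{x}-\mathbf{c}|<\iota_2$ implies $|f(\mathbf{x})-f(\mathbf{c})|<\iota_1$; $f$ is $(k,n)$-continuous iff it is $(k,n)$-continuous at every point of its domain. *)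

From Stdlib Require Import Reals ZArith Lia Lra ClassicalEpsilon.
Open Scope R_scope.

(* A formal series sum_{i >= -k} a_i eps^i : coefficients indexed by Z,
   vanishing below some index. *)
Record LS : Type := mkLS {
  coef : Z -> R ;
  coef_lb : exists k : Z, forall i : Z, (i < k)%Z -> coef i = 0
}.

Lemma LS_add_lb (x y : LS) :
  exists k : Z, forall i : Z, (i < k)%Z -> coef x i + coef y i = 0.
Proof.
  destruct (coef_lb x) as [k1 H1]; destruct (coef_lb y) as [k2 H2].
  exists (Z.min k1 k2); intros i Hi.
  rewrite H1 by lia; rewrite H2 by lia; ring.
Qed.

Lemma LS_opp_lb (x : LS) :
  exists k : Z, forall i : Z, (i < k)%Z -> - coef x i = 0.
Proof.
  destruct (coef_lb x) as [k H]; exists k; intros i Hi; rewrite H by lia; ring.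
Qed.

Definition LSadd (x y : LS) : LS := mkLS (fun i => coef x i + coef y i) (LS_add_lb x y).
Definition LSopp (x : LS) : LS := mkLS (fun i => - coef x i) (LS_opp_lb x).
Definition LSsub (x y : LS) : LS := LSadd x (LSopp y).

Lemma LSmono_lb (a : R) (p : Z) :
  exists k : Z, forall i : Z, (i < k)%Z -> (if Z.eq_dec i p then a else 0) = 0.
Proof.
  exists p; intros i Hi; destruct (Z.eq_dec i p); [lia | reflexivity].
Qed.
Definition LSmono (a : R) (p : Z) : LS :=
  mkLS (fun i => if Z.eq_dec i p then a else 0) (LSmono_lb a p).

Definition LSpos (x : LS) : Prop :=
  exists i : Z, 0 < coef x i /\ forall j : Z, (j < i)%Z -> coef x j = 0.
Definition LSlt (x y : LS) : Prop := LSpos (LSsub y x).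

Definition LSabs (x : LS) : LS :=
  match excluded_middle_informative (LSpos (LSopp x)) with
  | left _ => LSopp x
  | right _ => x
  end.

(* Positive elements of Delta^p are exactly a eps^p with a > 0 real. *)
Definition kn_continuous_at (k n : nat) (f : LS -> LS) (c : LS) : Prop :=
  forall a : R, 0 < a ->
  exists b : R, 0 < b /\
    forall x : LS, LSlt (LSabs (LSsub x c)) (LSmono b (Z.of_nat n)) ->
      LSlt (LSabs (LSsub (f x) (f c))) (LSmono a (Z.of_nat k)).

Definition kn_continuous (k n : nat) (f : LS -> LS) : Prop :=
  forall c : LS, kn_continuous_at k n f c.


Lemma kn_continuous_at_comp (k n q : nat) (f g : LS -> LS) (c : LS) :
  kn_continuous_at k n f (g c) -> kn_continuous_at n q g c ->
  kn_continuous_at k q (fun x => f (g x)) c.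
Proof.
  intros Hf Hg a Ha.
  destruct (Hf a Ha) as [b [Hb Hfb]].
  destruct (Hg b Hb) as [d [Hd Hgd]].
  exists d; split; [exact Hd |].
  intros x Hx; exact (Hfb (g x) (Hgd x Hx)).
Qed.

Theorem mainTheorem11 (k n q : nat) (f g : LS -> LS) :
  kn_continuous k n f -> kn_continuous n q g ->
  kn_continuous k q (fun x => f (g x)).
Proof.
  intros Hf Hg c.
  exact (kn_continuous_at_comp k n q f g c (Hf (g c)) (Hg c)).
Qed.
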